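(* Let $\mathcal{S}$ and $\mathcal{A}$ be quantum systems (the open system and an ancilla), let $\mathcal{E}_{t_1}$ and $\mathcal{E}_{t_2}$ be two completely positive trace-preserving (CPT) maps on $\mathcal{S}$, and let $\rho^{\mathcal{S}\mathcal{A}}_0$ be a joint state of $\mathcal{S}$ and $\mathcal{A}$. For $t\in\{t_1,t_2\}$ set $\rho^{\mathcal{S}\mathcal{A}}_t=(\mathcal{E}_t\otimes \mathbb{1}_{\mathcal{A}})[\rho^{\mathcal{S}\mathcal{A}}_0]$. Let $f$ be a non-negative function on states of $\mathcal{S}\mathcal{A}$ which is non-increasing under local CPT maps on $\mathcal{S}$, i.e. $f((\Phi\otimes\mathbb{1}_{\mathcal{A}})[\rho])\le f(\rho)$ for every CPT map $\Phi$ on $\mathcal{S}$ and every state $\rho$. Define, for a state $\rho^{\mathcal{S}\mathcal{A}}$, $$F_f[\rho^{\mathcal{S}\mathcal{A}}]=\min_{\{p_k,\rho_k\}}\sum_k p_k f(\rho_k),\qquad F_f^\sharp[\rho^{\mathcal{S}\mathcal{A}}]=\max_{\{p_k,\rho_k\}}\sum_k p_k f(\rho_k),$$ where the minimum and maximum run over all decompositions of $\rho^{\mathcal{S}\mathcal{A}}$ into states, i.e. probabilities $p_k\ge 0$ and states $\rho_k$ of $\mathcal{S}\mathcal{A}$ with $\sum_k p_k\rho_k=\rho^{\mathcal{S}\mathcal{A}}$. If $$F_f^\sharp[\rho^{\mathcal{S}\mathcal{A}}_{t_1}]<F_f[\rho^{\mathcal{S}\mathcal{A}}_{t_2}]$$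 for some such $f$, then the dynamics $(\mathcal{E}_{t_1},\mathcal{E}_{t_2})$ is not realizable with classical memory.
   Context: A dynamics $(\mathcal{E}_{t_1},\mathcal{E}_{t_2})$, consisting of two CPT maps on system $\mathcal{S}$, is called realizable with classical memory if there exist operators $K_i$ on $\mathcal{S}$ with $\sum_i K_i^\dagger K_i=\mathbb{1}$ and CPT maps $\Phi_i$ on $\mathcal{S}$ such that for all states $\rho$ of $\mathcal{S}$: $\mathcal{E}_{t_1}[\rho]=\sum_i K_i\rho K_i^\dagger$ and $\mathcal{E}_{t_2}[\rho]=\sum_i\Phi_i[K_i\rho K_i^\dagger]$. The ancilla $\mathcal{A}$ is untouched by the dynamics; $\mathbb{1}_{\mathcal{A}}$ denotes the identity map on $\mathcal{A}$. *)

From HB Require Import structures.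
From mathcomp Require Import all_boot all_order all_algebra.
From mathcomp Require Import all_classical all_reals.
From mathcomp Require Import ereal.
From mathcomp Require Import complex mxtens.

Set Implicit Arguments.
Unset Strict Implicit.
Unset Printing Implicit Defensive.
Import Order.TTheory GRing.Theory Num.Theory.
Local Open Scope ring_scope.

Definition adjmx {R : rcfType} {m n : nat} (A : 'M[R[i]]_(m, n)) : 'M[R[i]]_(n, m) :=
  (map_mx (@conjc R) A)^T.

Definition psdmx {R : rcfType} {n : nat} (A : 'M[R[i]]_n) : Prop :=
  adjmx A = A /\ forall v : 'cV[R[i]]_n, 0 <= (adjmx v *m A *m v) 0 0.

Definition is_state {R : rcfType} {n : nat} (A : 'M[R[i]]_n) : Prop :=
  psdmx A /\ \tr A = 1.

(* the (a,b) block of a matrix on S (x) A, indices ordered as in mxtens *)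
Definition block {R : rcfType} {d e : nat} (X : 'M[R[i]]_(d * e)) (a b : 'I_e)
  : 'M[R[i]]_d :=
  \matrix_(i, j) X (mxtens_index (i, a)) (mxtens_index (j, b)).

(* (Phi (x) 1_A)[X] for a map Phi on the first tensor factor *)
Definition tens_id {R : rcfType} {d e : nat}
  (Phi : 'M[R[i]]_d -> 'M[R[i]]_d) (X : 'M[R[i]]_(d * e)) : 'M[R[i]]_(d * e) :=
  \sum_(a < e) \sum_(b < e) (Phi (block X a b) *t (delta_mx a b : 'M[R[i]]_e)).

Definition linear_map {R : rcfType} {d : nat} (Phi : 'M[R[i]]_d -> 'M[R[i]]_d) : Prop :=
  forall (c : R[i]) (X Y : 'M[R[i]]_d), Phi (c *: X + Y) = c *: Phi X + Phi Y.

Definition completely_positive {R : rcfType} {d : nat}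
  (Phi : 'M[R[i]]_d -> 'M[R[i]]_d) : Prop :=
  forall (n : nat) (X : 'M[R[i]]_(d * n)), psdmx X -> psdmx (tens_id Phi X).

Definition trace_preserving {R : rcfType} {d : nat}
  (Phi : 'M[R[i]]_d -> 'M[R[i]]_d) : Prop :=
  forall X : 'M[R[i]]_d, \tr (Phi X) = \tr X.

Definition CPT {R : rcfType} {d : nat} (Phi : 'M[R[i]]_d -> 'M[R[i]]_d) : Prop :=
  [/\ linear_map Phi, completely_positive Phi & trace_preserving Phi].

Definition realizable_classical_memory {R : rcfType} {d : nat}
  (E1 E2 : 'M[R[i]]_d -> 'M[R[i]]_d) : Prop :=
  exists (n : nat) (K : 'I_n -> 'M[R[i]]_d) (Phis : 'I_n -> 'M[R[i]]_d -> 'M[R[i]]_d),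
    [/\ \sum_(k < n) adjmx (K k) *m K k = 1%:M,
        forall k, CPT (Phis k)
      & forall rho : 'M[R[i]]_d, is_state rho ->
          E1 rho = \sum_(k < n) K k *m rho *m adjmx (K k) /\
          E2 rho = \sum_(k < n) Phis k (K k *m rho *m adjmx (K k))].

Definition decomp_values {R : realType} {D : nat}
  (f : 'M[R[i]]_D -> R) (rho : 'M[R[i]]_D) : set (\bar R) :=
  [set x | exists (n : nat) (p : 'I_n -> R) (s : 'I_n -> 'M[R[i]]_D),
      [/\ forall k, 0 <= p k,
          forall k, is_state (s k),
          \sum_(k < n) real_complex R (p k) *: s k = rho
        & x = (\sum_(k < n) p k * f (s k))%:E]].

(* F_f (min = inf) and F_f^# (max = sup), in the extended reals *)
Definition F_min {R : realType} {D : nat} (f : 'M[R[i]]_D -> R) (rho : 'M[R[i]]_D)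
  : \bar R := ereal_inf (decomp_values f rho).
Definition F_max {R : realType} {D : nat} (f : 'M[R[i]]_D -> R) (rho : 'M[R[i]]_D)
  : \bar R := ereal_sup (decomp_values f rho).

(* A classical-memory realization provides operators K_k and channels Phi_k with
   E1 = sum_k K_k . K_k^† and E2 = sum_k Phi_k (K_k . K_k^†).  These identities are
   only assumed on states, but both sides are linear and, by polarization, the span
   of the states is every matrix, so they hold everywhere.  Applied blockwise to
   rho0, the positive operators (K_k (x) 1) rho0 (K_k (x) 1)^† are p_k sigma_k with
   p_k >= 0 and sigma_k states, whence
     (E1 (x) 1)[rho0] = sum_k p_k sigma_k,  (E2 (x) 1)[rho0] = sum_k p_k (Phi_k (x) 1)[sigma_k].
   Monotonicity of f then gives
     F_f[rho_t2] <= sum_k p_k f((Phi_k (x) 1)[sigma_k]) <= sum_k p_k f(sigma_k) <= F_f^#[rho_t1]. *)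

From HB Require Import structures.
From mathcomp Require Import all_boot all_order all_algebra.
From mathcomp Require Import all_classical all_reals.
From mathcomp Require Import ereal.
From mathcomp Require Import complex mxtens.
From mathcomp Require Import ring.
Import Order.TTheory GRing.Theory Num.Theory.
Local Open Scope ring_scope.

Set Implicit Arguments.
Unset Strict Implicit.
Unset Printing Implicit Defensive.

Section Adjoint.
Variable R : rcfType.
Local Notation C := R[i].

Lemma adjmxE m n (A : 'M[C]_(m, n)) i j : adjmx A i j = (A j i)^*%C.
Proof. by rewrite !mxE. Qed.

Lemma adjmxK m n (A : 'M[C]_(m, n)) : adjmx (adjmx A) = A.
Proof. by apply/matrixP=> i j; rewrite !adjmxE conjcK. Qed.

Lemma adjmxM m n p (A : 'M[C]_(m, n)) (B : 'M[C]_(n, p)) :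
  adjmx (A *m B) = adjmx B *m adjmx A.
Proof. by rewrite /adjmx map_mxM trmx_mul. Qed.

Lemma adjmxD m n (A B : 'M[C]_(m, n)) : adjmx (A + B) = adjmx A + adjmx B.
Proof. by apply/matrixP=> i j; rewrite !mxE rmorphD. Qed.

Lemma adjmxZ m n (c : C) (A : 'M[C]_(m, n)) : adjmx (c *: A) = c^*%C *: adjmx A.
Proof. by apply/matrixP=> i j; rewrite !mxE rmorphM. Qed.

Lemma adjmx_delta m n (i : 'I_m) (j : 'I_n) :
  adjmx (delta_mx i j : 'M[C]_(m, n)) = delta_mx j i.
Proof. by apply/matrixP=> k l; rewrite !mxE conjc_nat andbC. Qed.

End Adjoint.

Section PositiveSemidefinite.
Variable R : rcfType.
Local Notation C := R[i].
Variable n : nat.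
Implicit Types (X : 'M[C]_n) (u v w : 'cV[C]_n).

Lemma quad_delta X i j :
  (adjmx (delta_mx i 0 : 'cV_n) *m X *m (delta_mx j 0 : 'cV_n)) 0 0 = X i j.
Proof. by rewrite adjmx_delta -rowE -colE !mxE. Qed.

Lemma psdmx_diag_ge0 X i : psdmx X -> 0 <= X i i.
Proof. by case=> _ /(_ (delta_mx i 0)); rewrite quad_delta. Qed.

Lemma psdmx_conj_entry X i j : psdmx X -> X j i = (X i j)^*%C.
Proof. by case=> /matrixP /(_ j i) <- _; rewrite adjmxE. Qed.

Lemma mxtrace_psd_ge0 X : psdmx X -> 0 <= \tr X.
Proof. by move=> hX; apply: sumr_ge0 => i _; apply: psdmx_diag_ge0. Qed.

Lemma quad_addZ X u v c :
  (adjmx (u + c *: v) *m X *m (u + c *: v)) 0 0 =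
  (adjmx u *m X *m u) 0 0 + c * (adjmx u *m X *m v) 0 0
  + c^*%C * (adjmx v *m X *m u) 0 0 + c^*%C * c * (adjmx v *m X *m v) 0 0.
Proof.
rewrite adjmxD adjmxZ !mulmxDl !mulmxDr -!scalemxAl -!scalemxAr !mxE.
by rewrite mulrA; ring.
Qed.

Lemma psdmx_trace_eq0 X : psdmx X -> \tr X = 0 -> X = 0.
Proof.
move=> hX trX0.
have diag0 i : X i i = 0.
  apply: (psumr_eq0P (P := xpredT) (F := fun i => X i i)) => // k _.
  exact: psdmx_diag_ge0.
apply/matrixP=> i j; rewrite mxE.
(* The form at e_i - X_ji e_j is -2 |X_ji|^2, as the diagonal of X vanishes. *)
have := hX.2 (delta_mx i 0 + (- (X i j)^*%C) *: delta_mx j 0).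
rewrite quad_addZ !quad_delta !diag0 (psdmx_conj_entry j i hX) rmorphN conjcK.
set x := X j i; rewrite mulr0 addr0 add0r.
have -> : - x * x^*%C + - x^*%C * x = - (2%:R * (x * x^*%C)) by ring.
rewrite oppr_ge0 pmulr_rle0 ?ltr0n // => xx_le0.
have /eqP : x * x^*%C = 0 by apply/le_anti; rewrite xx_le0 mulcJ_ge0.
by rewrite mulf_eq0 conjc_eq0 orbb => /eqP ->; rewrite conjc0.
Qed.

Lemma psdmx_outer w : psdmx (w *m adjmx w).
Proof.
split; first by rewrite adjmxM adjmxK.
move=> v; rewrite mulmxA -mulmxA -[adjmx w *m v]adjmxK adjmxM adjmxK.
by rewrite mxE big_ord1 adjmxE mulcJ_ge0.
Qed.

Lemma psdmxZ (c : C) X : 0 <= c -> psdmx X -> psdmx (c *: X).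
Proof.
move=> c_ge0 [X_herm X_quad]; split.
  by rewrite adjmxZ X_herm; case: c c_ge0 => a b /ger0_Im /= ->; rewrite oppr0.
by move=> v; rewrite -scalemxAr -scalemxAl mxE mulr_ge0.
Qed.

End PositiveSemidefinite.

Lemma psdmx_conj (R : rcfType) m n (A : 'M[R[i]]_(m, n)) (X : 'M[R[i]]_n) :
  psdmx X -> psdmx (A *m X *m adjmx A).
Proof.
case=> X_herm X_quad; split; first by rewrite !adjmxM adjmxK X_herm mulmxA.
move=> v; have := X_quad (adjmx A *m v).
by rewrite adjmxM adjmxK !mulmxA.
Qed.

Lemma outer_addZ (R : rcfType) n (u v : 'cV[R[i]]_n) (c : R[i]) :
  (u + c *: v) *m adjmx (u + c *: v) = u *m adjmx u + c^*%C *: (u *m adjmx v)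
    + c *: (v *m adjmx u) + (c * c^*%C) *: (v *m adjmx v).
Proof.
rewrite adjmxD adjmxZ mulmxDl !mulmxDr -!scalemxAl -!scalemxAr scalerA.
by rewrite addrA.
Qed.

Lemma outer_polarization (R : rcfType) n (u v : 'cV[R[i]]_n) :
  4%:R *: (u *m adjmx v) =
  \sum_(c <- [:: 1; -1; 'i%C; - 'i%C]) c *: ((u + c *: v) *m adjmx (u + c *: v)).
Proof.
have conj1 : 1^*%C = 1 :> R[i] by rewrite conjc1.
have conjN1 : (-1)^*%C = -1 :> R[i] by apply/eqP; rewrite eq_complex /= !oppr0 !eqxx.
have conj_i : 'i%C^*%C = - 'i%C :> R[i] by apply/eqP; rewrite eq_complex /= oppr0 !eqxx.
have conjNi : (- 'i%C)^*%C = 'i%C :> R[i].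
  by apply/eqP; rewrite eq_complex /= oppr0 opprK !eqxx.
have i2 : 'i%C * 'i%C = -1 :> R[i] by rewrite -expr2 sqr_i.
under eq_bigr do rewrite outer_addZ.
rewrite !big_cons big_nil conj1 conjN1 conj_i conjNi.
move: (u *m adjmx u) (u *m adjmx v) (v *m adjmx u) (v *m adjmx v) => A B C D.
apply/matrixP => k l; rewrite !mxE.
set z := 'i%C in i2 *; clearbody z.
ring: i2.
Qed.

Section LinearMap.
Variables (R : rcfType) (n : nat) (L : 'M[R[i]]_n -> 'M[R[i]]_n).
Hypothesis L_lin : linear_map L.

Lemma linear_map0 : L 0 = 0.
Proof.
have := L_lin 1 0 0; rewrite scale1r !addr0 scale1r => L0_double.
by apply: (addrI (L 0)); rewrite addr0 -L0_double.
Qed.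

Lemma linear_mapD X Y : L (X + Y) = L X + L Y.
Proof. by rewrite -[X]scale1r L_lin !scale1r. Qed.

Lemma linear_mapZ c X : L (c *: X) = c *: L X.
Proof. by rewrite -[c *: X]addr0 L_lin linear_map0 addr0. Qed.

Lemma linear_map_sum I r (P : pred I) (F : I -> 'M[R[i]]_n) :
  L (\sum_(k <- r | P k) F k) = \sum_(k <- r | P k) L (F k).
Proof. exact: (big_morph L linear_mapD linear_map0). Qed.

End LinearMap.

Section LinearMapsAgreeingOnStates.
Variables (R : rcfType) (n : nat) (L M : 'M[R[i]]_n -> 'M[R[i]]_n).
Hypotheses (L_lin : linear_map L) (M_lin : linear_map M).
Hypothesis eq_LM_states : forall rho, is_state rho -> L rho = M rho.

Lemma linear_map_eq_psd X : psdmx X -> L X = M X.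
Proof.
move=> X_psd; have [trX0|trX_neq0] := eqVneq (\tr X) 0.
  by rewrite (psdmx_trace_eq0 X_psd trX0) (linear_map0 L_lin) (linear_map0 M_lin).
have -> : X = \tr X *: ((\tr X)^-1 *: X) by rewrite scalerA mulfV ?scale1r.
rewrite (linear_mapZ L_lin) (linear_mapZ M_lin) eq_LM_states //; split.
  by apply: psdmxZ => //; rewrite invr_ge0 mxtrace_psd_ge0.
by rewrite mxtraceZ mulVf.
Qed.

Lemma linear_map_eq_delta i j : L (delta_mx i j) = M (delta_mx i j).
Proof.
have pol := outer_polarization (delta_mx i 0 : 'cV[R[i]]_n) (delta_mx j 0).
rewrite adjmx_delta mul_delta_mx in pol.
apply: (@scalerI _ _ 4%:R); first by rewrite pnatr_eq0.
rewrite -(linear_mapZ L_lin) -(linear_mapZ M_lin) pol.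
rewrite (linear_map_sum L_lin) (linear_map_sum M_lin); apply: eq_bigr => c _.
rewrite (linear_mapZ L_lin) (linear_mapZ M_lin) linear_map_eq_psd //.
exact: psdmx_outer.
Qed.

Lemma linear_map_eq_on_states X : L X = M X.
Proof.
rewrite (matrix_sum_delta X) (linear_map_sum L_lin) (linear_map_sum M_lin).
apply: eq_bigr => i _; rewrite (linear_map_sum L_lin) (linear_map_sum M_lin).
apply: eq_bigr => j _; rewrite (linear_mapZ L_lin) (linear_mapZ M_lin).
by rewrite linear_map_eq_delta.
Qed.

End LinearMapsAgreeingOnStates.

Lemma sum_mulrb_eq (V : nmodType) (I : finType) (i : I) (F : I -> V) :
  \sum_j F j *+ (i == j) = F i.
Proof.
rewrite (bigD1 i) //= eqxx big1 ?addr0 // => j; rewrite eq_sym => /negbTE->.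
exact: mulr0n.
Qed.

Lemma big_mxtens_index (V : nmodType) d e (F : 'I_(d * e) -> V) :
  \sum_k F k = \sum_(i < d) \sum_(a < e) F (mxtens_index (i, a)).
Proof.
rewrite pair_big /= (reindex (@mxtens_index d e)) /=; last first.
  by exists (@mxtens_unindex d e) => k _; rewrite (mxtens_indexK, mxtens_unindexK).
by apply: eq_bigr => -[i a].
Qed.

Section Blocks.
Variables (R : rcfType) (d e : nat).
Local Notation C := R[i].
Implicit Types (X Z : 'M[C]_(d * e)) (A : 'M[C]_d) (a b : 'I_e).

Lemma blockE X a b i j : block X a b i j = X (mxtens_index (i, a)) (mxtens_index (j, b)).
Proof. by rewrite mxE. Qed.

Lemma eq_blocks X Y : (forall a b, block X a b = block Y a b) -> X = Y.
Proof.
move=> eqXY; apply/matrixP => r s.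
case: (mxtens_indexP r) => i a; case: (mxtens_indexP s) => j b.
by rewrite -!blockE eqXY.
Qed.

Lemma block_sum n (F : 'I_n -> 'M[C]_(d * e)) a b :
  block (\sum_(k < n) F k) a b = \sum_(k < n) block (F k) a b.
Proof.
by apply/matrixP => i j; rewrite blockE !summxE; apply: eq_bigr => k _; rewrite blockE.
Qed.

Lemma blockZ (c : C) X a b : block (c *: X) a b = c *: block X a b.
Proof. by apply/matrixP => i j; rewrite !mxE. Qed.

Lemma block_tens_delta A a b a' b' :
  block (A *t (delta_mx a b : 'M[C]_e)) a' b' = A *+ (a' == a) *+ (b' == b).
Proof.
apply/matrixP => i j; rewrite blockE tensmxE !mxE !mulmxnE -mulrnA mulnb.
by rewrite mulr_natr.
Qed.

Lemma block_tens_id (Phi : 'M[C]_d -> 'M[C]_d) X a b :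
  block (tens_id Phi X) a b = Phi (block X a b).
Proof.
rewrite /tens_id block_sum -(sum_mulrb_eq a (fun a' => Phi (block X a' b))).
apply: eq_bigr => a' _; rewrite block_sum.
rewrite -(sum_mulrb_eq b (fun b' => Phi (block X a' b') *+ (a == a'))).
apply: eq_bigr => b' _.
by rewrite block_tens_delta.
Qed.

Lemma mxtrace_block X : \tr X = \sum_a \tr (block X a a).
Proof.
rewrite /mxtrace big_mxtens_index exchange_big; apply: eq_bigr => a _.
by apply: eq_bigr => i _; rewrite blockE.
Qed.

Lemma mxtrace_tens_id (Phi : 'M[C]_d -> 'M[C]_d) X :
  trace_preserving Phi -> \tr (tens_id Phi X) = \tr X.
Proof.
by move=> Phi_tp; rewrite !mxtrace_block; apply: eq_bigr => a _; rewrite block_tens_id.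
Qed.

Lemma is_state_tens_id (Phi : 'M[C]_d -> 'M[C]_d) X :
  CPT Phi -> is_state X -> is_state (tens_id Phi X).
Proof.
by case=> _ Phi_cp Phi_tp [X_psd trX]; split; [apply: Phi_cp | rewrite mxtrace_tens_id].
Qed.

Lemma block_tens1_mulmx A Z a b :
  block ((A *t (1%:M : 'M[C]_e)) *m Z) a b = A *m block Z a b.
Proof.
apply/matrixP => i j; rewrite blockE !mxE big_mxtens_index; apply: eq_bigr => l _.
rewrite blockE -(sum_mulrb_eq a (fun c => A i l * Z (mxtens_index (l, c)) _)).
by apply: eq_bigr => c _; rewrite tensmxE !mxE mulrAC mulr_natr.
Qed.

Lemma block_mulmx_tens1 A Z a b :
  block (Z *m (A *t (1%:M : 'M[C]_e))) a b = block Z a b *m A.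
Proof.
apply/matrixP => i j; rewrite blockE !mxE big_mxtens_index; apply: eq_bigr => l _.
rewrite blockE -(sum_mulrb_eq b (fun c => Z _ (mxtens_index (l, c)) * A l j)).
by apply: eq_bigr => c _; rewrite tensmxE !mxE mulrA mulr_natr eq_sym.
Qed.

Lemma adjmx_tens1 A : adjmx (A *t (1%:M : 'M[C]_e)) = adjmx A *t 1%:M.
Proof. by rewrite /adjmx map_mxT trmx_tens map_mx1 trmx1. Qed.

Lemma eq_tens_id (Phi Psi : 'M[C]_d -> 'M[C]_d) X :
  Phi =1 Psi -> tens_id Phi X = tens_id Psi X.
Proof. by move=> eqPhi; apply: eq_blocks => a b; rewrite !block_tens_id. Qed.

Lemma tens_id_sum n (Phi : 'I_n -> 'M[C]_d -> 'M[C]_d) X :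
  tens_id (fun W => \sum_(k < n) Phi k W) X = \sum_(k < n) tens_id (Phi k) X.
Proof.
apply: eq_blocks => a b; rewrite block_tens_id block_sum.
by apply: eq_bigr => k _; rewrite block_tens_id.
Qed.

Lemma tens_id_comp (Phi Psi : 'M[C]_d -> 'M[C]_d) X :
  tens_id (Phi \o Psi) X = tens_id Phi (tens_id Psi X).
Proof. by apply: eq_blocks => a b; rewrite !block_tens_id. Qed.

Lemma tens_idZ (Phi : 'M[C]_d -> 'M[C]_d) (c : C) X :
  linear_map Phi -> tens_id Phi (c *: X) = c *: tens_id Phi X.
Proof.
by move=> Phi_lin; apply: eq_blocks => a b; rewrite blockZ !block_tens_id blockZ linear_mapZ.
Qed.

Lemma tens_id_conj A X :
  tens_id (fun W => A *m W *m adjmx A) X =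
  (A *t (1%:M : 'M[C]_e)) *m X *m adjmx (A *t (1%:M : 'M[C]_e)).
Proof.
apply: eq_blocks => a b.
by rewrite block_tens_id adjmx_tens1 block_mulmx_tens1 block_tens1_mulmx.
Qed.

End Blocks.

Lemma psdmx_scaled_state (R : rcfType) n (s0 X : 'M[R[i]]_n) :
  is_state s0 -> psdmx X ->
  exists p s, [/\ 0 <= p, is_state s & real_complex R p *: s = X].
Proof.
move=> s0_state X_psd; have trX_ge0 := mxtrace_psd_ge0 X_psd.
have [trX0|trX_neq0] := eqVneq (\tr X) 0.
  by exists 0, s0; rewrite scale0r (psdmx_trace_eq0 X_psd trX0).
have trX_real : real_complex R (complex.Re (\tr X)) = \tr X by rewrite RRe_real ?ger0_real.
exists (complex.Re (\tr X)), ((\tr X)^-1 *: X); split.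
- by rewrite -ler0c trX_real.
- split; last by rewrite mxtraceZ mulVf.
  by apply: psdmxZ => //; rewrite invr_ge0.
- by rewrite trX_real scalerA mulfV ?scale1r.
Qed.

Section KrausMaps.
Variables (R : rcfType) (d : nat).
Local Notation C := R[i].

Lemma linear_map_conj (A : 'M[C]_d) : linear_map (fun X => A *m X *m adjmx A).
Proof. by move=> c X Y; rewrite mulmxDr mulmxDl -scalemxAr -scalemxAl. Qed.

Lemma linear_map_comp (Phi Psi : 'M[C]_d -> 'M[C]_d) :
  linear_map Phi -> linear_map Psi -> linear_map (Phi \o Psi).
Proof. by move=> Phi_lin Psi_lin c X Y /=; rewrite Psi_lin Phi_lin. Qed.

Lemma linear_map_sum_maps n (Phi : 'I_n -> 'M[C]_d -> 'M[C]_d) :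
  (forall k, linear_map (Phi k)) -> linear_map (fun X => \sum_(k < n) Phi k X).
Proof.
move=> Phi_lin c X Y; rewrite scaler_sumr -big_split.
by apply: eq_bigr => k _; rewrite Phi_lin.
Qed.

End KrausMaps.

Lemma realizable_state_decomposition (R : rcfType) dS dA
    (E1 E2 : 'M[R[i]]_dS -> 'M[R[i]]_dS) (rho0 : 'M[R[i]]_(dS * dA)) :
  CPT E1 -> CPT E2 -> is_state rho0 -> realizable_classical_memory E1 E2 ->
  exists n (p : 'I_n -> R) (s : 'I_n -> 'M[R[i]]_(dS * dA))
         (Phi : 'I_n -> 'M[R[i]]_dS -> 'M[R[i]]_dS),
  [/\ forall k, 0 <= p k, forall k, is_state (s k), forall k, CPT (Phi k),
      tens_id E1 rho0 = \sum_(k < n) real_complex R (p k) *: s k &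
      tens_id E2 rho0 = \sum_(k < n) real_complex R (p k) *: tens_id (Phi k) (s k)].
Proof.
move=> [E1_lin _ _] [E2_lin _ _] rho0_state [n [K [Phi [_ Phi_CPT E_kraus]]]].
pose conjK k X := K k *m X *m adjmx (K k).
have conjK_lin k : linear_map (conjK k) by exact: linear_map_conj.
have Phi_lin k : linear_map (Phi k) by case: (Phi_CPT k).
have E1_kraus : E1 =1 (fun X => \sum_(k < n) conjK k X).
  apply: (linear_map_eq_on_states E1_lin (linear_map_sum_maps conjK_lin)).
  by move=> rho /E_kraus [].
have E2_kraus : E2 =1 (fun X => \sum_(k < n) (Phi k \o conjK k) X).
  have Phi_conjK_lin k : linear_map (Phi k \o conjK k) by apply: linear_map_comp.
  apply: (linear_map_eq_on_states E2_lin (linear_map_sum_maps Phi_conjK_lin)).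
  by move=> rho /E_kraus [].
have /fin_all_exists [p /fin_all_exists [s ps_spec]] k :
    exists p s, [/\ 0 <= p, is_state s & real_complex R p *: s = tens_id (conjK k) rho0].
  apply: (psdmx_scaled_state rho0_state); rewrite tens_id_conj.
  by apply: psdmx_conj; case: rho0_state.
exists n, p, s, Phi; split=> [k|k|||].
- by case: (ps_spec k).
- by case: (ps_spec k).
- exact: Phi_CPT.
- rewrite (eq_tens_id _ E1_kraus) tens_id_sum.
  by apply: eq_bigr => k _; case: (ps_spec k) => _ _ ->.
- rewrite (eq_tens_id _ E2_kraus) tens_id_sum; apply: eq_bigr => k _.
  rewrite (tens_id_comp (Phi k) (conjK k)); case: (ps_spec k) => _ _ <-.
  exact: tens_idZ.
Qed.

Lemma decomp_le_F_max (R : realType) D (f : 'M[R[i]]_D -> R) rho n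
    (p : 'I_n -> R) (s : 'I_n -> 'M[R[i]]_D) :
  (forall k, 0 <= p k) -> (forall k, is_state (s k)) ->
  \sum_(k < n) real_complex R (p k) *: s k = rho ->
  ((\sum_(k < n) p k * f (s k))%:E <= F_max f rho)%E.
Proof. by move=> p_ge0 s_state rhoE; apply: ereal_sup_ubound; exists n, p, s. Qed.

Lemma F_min_le_decomp (R : realType) D (f : 'M[R[i]]_D -> R) rho n
    (p : 'I_n -> R) (s : 'I_n -> 'M[R[i]]_D) :
  (forall k, 0 <= p k) -> (forall k, is_state (s k)) ->
  \sum_(k < n) real_complex R (p k) *: s k = rho ->
  (F_min f rho <= (\sum_(k < n) p k * f (s k))%:E)%E.
Proof. by move=> p_ge0 s_state rhoE; apply: ereal_inf_lbound; exists n, p, s. Qed.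

Unset Implicit Arguments.
Set Strict Implicit.

Theorem theorem1 (R : realType) (dS dA : nat)
  (E1 E2 : 'M[R[i]]_dS -> 'M[R[i]]_dS) (rho0 : 'M[R[i]]_(dS * dA))
  (f : 'M[R[i]]_(dS * dA) -> R) :
  CPT E1 -> CPT E2 -> is_state rho0 ->
  (forall rho, is_state rho -> 0 <= f rho) ->
  (forall (Phi : 'M[R[i]]_dS -> 'M[R[i]]_dS) (rho : 'M[R[i]]_(dS * dA)),
      CPT Phi -> is_state rho -> f (tens_id Phi rho) <= f rho) ->
  (F_max f (tens_id E1 rho0) < F_min f (tens_id E2 rho0))%E ->
  ~ realizable_classical_memory E1 E2.
Proof.
move=> E1_CPT E2_CPT rho0_state _ f_mono F_lt realizable.
have [n [p [s [Phi [p_ge0 s_state Phi_CPT E1_rho0 E2_rho0]]]]] :=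
  realizable_state_decomposition E1_CPT E2_CPT rho0_state realizable.
have Phi_s_state k : is_state (tens_id (Phi k) (s k)).
  exact: is_state_tens_id (Phi_CPT k) (s_state k).
have F_max_ge := decomp_le_F_max f p_ge0 s_state (esym E1_rho0).
have F_min_le := F_min_le_decomp f p_ge0 Phi_s_state (esym E2_rho0).
have mono_sum : ((\sum_(k < n) p k * f (tens_id (Phi k) (s k)))%:E
                 <= (\sum_(k < n) p k * f (s k))%:E)%E.
  by rewrite lee_fin; apply: ler_sum => k _; rewrite ler_wpM2l ?f_mono.
by have := lt_le_trans F_lt (le_trans F_min_le (le_trans mono_sum F_max_ge)); rewrite ltxx.
Qed.
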